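(* There is a function $f$ on the natural numbers such that, for every finite group $G$, $\omega(\mathrm{EPow}(G))\leqslant f(\omega(\mathrm{Pow}(G)))$.
   Context: $\omega$ denotes clique number. $\mathrm{Pow}(G)$ is the graph on $G$ in which distinct $x,y$ are adjacent iff one is a power of the other; $\mathrm{EPow}(G)$ is the graph on $G$ in which distinct $x,y$ are adjacent iff $\langle x,y\rangle$ is cyclic. *)

From mathcomp Require Import all_boot all_fingroup all_solvable.
Set Implicit Arguments. Unset Strict Implicit. Unset Printing Implicit Defensive.
Local Open Scope group_scope.

Definition pow_adj (gT : finGroupType) (x y : gT) : bool :=
  (x != y) && ((x \in <[y]>) || (y \in <[x]>)).

Definition epow_adj (gT : finGroupType) (x y : gT) : bool :=
  (x != y) && cyclic <<[set x; y]>>.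

Definition is_clique (gT : finGroupType) (adj : gT -> gT -> bool) (S : {set gT}) : bool :=
  [forall x in S, forall y in S, (x != y) ==> adj x y].

Definition clique_number (gT : finGroupType) (adj : gT -> gT -> bool) (G : {set gT}) : nat :=
  \max_(S : {set gT} | (S \subset G) && is_clique adj S) #|S|.

Definition omega_Pow (gT : finGroupType) (G : {set gT}) := clique_number (@pow_adj gT) G.
Definition omega_EPow (gT : finGroupType) (G : {set gT}) := clique_number (@epow_adj gT) G.

(* Any two elements of an EPow-clique S generate a cyclic group, so S is
   abelian and, for each prime p, the p-parts of elements of S are totally
   ordered by inclusion of the cyclic groups they generate.  Multiplying, over
   all p, a p-part of maximal order gives z with S inside <[z]>, hence <<S>>
   is cyclic, say <<S>> = <[x]> with x in G.  The generators of <[x]> form a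
   Pow-clique, so totient #[x] <= omega(Pow(G)), and any n with
   totient n <= k divides ((k+1)!)^(k+1). *)

From mathcomp Require Import all_boot all_fingroup all_solvable.
From mathcomp Require Import zify.

Set Implicit Arguments.
Unset Strict Implicit.
Unset Printing Implicit Defensive.

Lemma pnat_dvdnE (p : nat) m n : p.-nat m -> p.-nat n -> (m %| n) = (m <= n).
Proof.
move=> pm pn; apply/idP/idP => [|le_mn]; first by apply: dvdn_leq; case/andP: pn.
have [a def_m] := p_natP pm; have [b def_n] := p_natP pn.
move: le_mn pm; rewrite def_m def_n.
have [p_gt1 | ] := ltnP 1 p; first by rewrite dvdn_Pexp2l // leq_exp2l.
case: p {pn def_m def_n} => [|[|//]] _ _; last by rewrite !exp1n.
by case: a => [|a]; rewrite ?expn0 ?dvd1n // exp0n.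
Qed.

Lemma totient_leq_dvdn n k : 0 < n -> totient n <= k -> n %| (k.+1)`! ^ k.+1.
Proof.
move=> n_gt0 le_nk; apply/dvdn_partP => // p; rewrite mem_primes.
case/and3P => p_pr _ p_dvd; have p_gt1 := prime_gt1 p_pr.
have a_gt0 : 0 < logn p n by rewrite logn_gt0 mem_primes p_pr n_gt0.
have : totient n`_p <= k.
  apply: leq_trans le_nk; rewrite -{2}(partnC p n_gt0) totient_coprime.
    by rewrite leq_pmulr // totient_gt0 part_gt0.
  exact: coprime_partC.
rewrite p_part totient_pfactor // => le_pk.
have le_a_k : logn p n <= k.+1.
  have := ltn_expl (logn p n).-1 p_gt1.
  have : p ^ (logn p n).-1 <= k by apply: leq_trans le_pk; apply: leq_pmull; lia.
  lia.
apply: dvdn_trans (dvdn_exp2l p le_a_k) (dvdn_exp2r _ (dvdn_fact _)).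
have : p.-1 <= k by apply: leq_trans le_pk; rewrite leq_pmulr // expn_gt0 ltnW.
lia.
Qed.

Section PairwiseCyclic.
Variable gT : finGroupType.
Local Open Scope group_scope.

Lemma constt_prod_abelian (H : {group gT}) (I : finType) (F : I -> gT) pi :
  abelian H -> (forall i, F i \in H) -> (\prod_i F i).`_pi = \prod_i (F i).`_pi.
Proof.
move=> abH FH.
suff [] : \prod_i F i \in H /\ (\prod_i F i).`_pi = \prod_i (F i).`_pi by [].
elim/big_rec2: _ => [|i y1 y2 _ [y1H <-]]; first by rewrite group1 constt1.
by rewrite groupM ?consttM //; apply: (centsP abH).
Qed.

Lemma cyclic_p_elt_mem_cycle (C : {group gT}) (p : nat) x y :
  cyclic C -> x \in C -> y \in C -> p.-elt x -> p.-elt y ->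
  #[x] <= #[y] -> x \in <[y]>.
Proof.
move=> cycC xC yC px py le_xy.
by rewrite -cycle_subG -(cardSg_cyclic cycC) ?cycle_subG // -!orderE (pnat_dvdnE px py).
Qed.

Lemma p_elt_mem_cycle_prod (H : {group gT}) n (w : nat -> gT) q :
  abelian H -> (forall p, w p \in H) -> (forall p : nat, p.-elt (w p)) ->
  q < n -> w q \in <[\prod_(p < n) w p]>.
Proof.
move=> abH wH pw lt_qn; have -> : w q = (\prod_(p < n) w p).`_q.
  rewrite (constt_prod_abelian _ abH) // -(big_rmcond _ _ (P := pred1 (Ordinal lt_qn))).
    by rewrite big_pred1_eq constt_p_elt.
  move=> i ne_iq; apply/constt1P; apply: sub_p_elt (pw i) => r.
  by rewrite !inE => /eqP ->.
exact: cycle_constt.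
Qed.

Lemma cyclic_gen_pairwise (S : {set gT}) :
  {in S &, forall x y, cyclic <<[set x; y]>>} -> cyclic <<S>>.
Proof.
move=> cycS; have [->|[s0 s0S]] := set_0Vmem S; first by rewrite gen0 cyclic1.
have abS : abelian <<S>>.
  rewrite abelian_gen; apply/centsP => x xS y yS.
  apply: (centsP (cyclic_abelian (cycS x y xS yS))); apply: mem_gen.
    by rewrite !inE eqxx.
  by rewrite !inE eqxx orbT.
have constt_in_gen (p : nat) t (A : {set gT}) : t \in A -> t.`_p \in <<A>>.
  by move=> tA; apply: subsetP (cycle_constt p t); rewrite cycle_subG mem_gen.
pose pmax (p : nat) := [arg max_(s > s0 in S) #[s.`_p]].
have pmaxS (p : nat) : pmax p \in S by rewrite /pmax; case: arg_maxnP.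
have constt_in_pmax (p : nat) t : t \in S -> t.`_p \in <[(pmax p).`_p]>.
  move=> tS; apply: (cyclic_p_elt_mem_cycle (cycS _ _ tS (pmaxS p))).
  - by apply: constt_in_gen; rewrite !inE eqxx.
  - by apply: constt_in_gen; rewrite !inE eqxx orbT.
  - exact: p_elt_constt.
  - exact: p_elt_constt.
  - by rewrite /pmax; case: arg_maxnP => // s _; apply.
pose z := \prod_(p < #|gT|.+1) (pmax p).`_p.
apply: cyclicS (cycle_cyclic z); rewrite gen_subG; apply/subsetP => t tS.
rewrite -(prod_constt t) big_nat_cond; apply: group_prod => p /andP[/andP[_ lt_p] _].
apply: subsetP (constt_in_pmax p t tS); rewrite cycle_subG.
apply: (p_elt_mem_cycle_prod (w := fun p => (pmax p).`_p) abS) => [q|q|].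
- exact/constt_in_gen/pmaxS.
- exact: p_elt_constt.
- by apply: leq_trans lt_p _; rewrite ltnS orderE max_card.
Qed.

Lemma epow_clique_card_leq_order (G : {group gT}) (S : {set gT}) :
  S \subset G -> is_clique (@epow_adj gT) S -> exists2 x, x \in G & #|S| <= #[x].
Proof.
move=> sSG clS; have : cyclic <<S>>.
  apply: cyclic_gen_pairwise => x y xS yS.
  have [<-|ne_xy] := eqVneq x y; first by rewrite setUid cycle_cyclic.
  by move: clS => /forall_inP/(_ x xS)/forall_inP/(_ y yS); rewrite ne_xy => /andP[].
case/cyclicP => x def_S; exists x; last by rewrite orderE -def_S subset_leq_card ?subset_gen.
by rewrite -cycle_subG -def_S gen_subG.
Qed.

Lemma pow_clique_generators x : is_clique (@pow_adj gT) [set y | generator <[x]> y].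
Proof.
apply/forall_inP => y; rewrite inE => /eqP gen_y; apply/forall_inP => u.
by rewrite inE => /eqP gen_u; rewrite /pow_adj -gen_u gen_y cycle_id andbT implybb.
Qed.

Lemma totient_order_leq_omega_Pow (G : {group gT}) x :
  x \in G -> totient #[x] <= omega_Pow G.
Proof.
move=> xG; rewrite totient_gen /omega_Pow /clique_number.
apply: (leq_bigmax_cond (F := fun S : {set gT} => #|S|)).
rewrite pow_clique_generators andbT; apply/subsetP => y.
rewrite inE => /cycle_generator /subsetP; apply; by rewrite cycle_subG.
Qed.

End PairwiseCyclic.

Theorem theorem4p2 :
  exists f : nat -> nat,
    forall (gT : finGroupType) (G : {group gT}),
      omega_EPow G <= f (omega_Pow G).
Proof.
exists (fun k => (k.+1)`! ^ k.+1) => gT G.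
apply/bigmax_leqP => S /andP[sSG clS].
have [x xG le_Sx] := epow_clique_card_leq_order sSG clS.
apply: leq_trans le_Sx (dvdn_leq _ _); first by rewrite expn_gt0 fact_gt0.
exact: totient_leq_dvdn (order_gt0 x) (totient_order_leq_omega_Pow xG).
Qed.
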